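(* Let $\overrightarrow{W}$ be a Morse sequence on a simplicial complex $K$, with reference map $\curlywedge$ and coreference map $\curlyvee$. (1) If $z,z'\in Z_p(K)$ satisfy $\curlywedge(z)=\curlywedge(z')$ and $z,z'\subseteq W^+_p$, then $z=z'$. (2) If $z,z'\in Z^p(K)$ satisfy $\curlyvee(z)=\curlyvee(z')$ and $z,z'\subseteq K\setminus W^-_p$, then $z=z'$.
   Context: A simplicial complex $K$ is a finite collection of non-empty finite sets closed under taking non-empty subsets; $\dim\sigma=|\sigma|-1$, $K^{(p)}$ the set of $p$-simplices. A pair $(\sigma,\tau)$ with $\sigma\subsetneq\tau$ is a free pair for $K$ if $\tau$ is the only simplex other than $\sigma$ containing $\sigma$; $K$ is then an elementary expansion of $K\setminus\{\sigma,\tau\}$. If $\nu$ is a facet (maximal simplex) of $K$, $K$ is an elementary filling of $K\setminus\{\nu\}$. A Morse sequence on $K$ is a sequence $\langle\emptyset=K_0,\dots,K_k=K\rangle$ with each $K_i$ an elementary expansion or filling of $K_{i-1}$; simplices added by fillings are critical; for an expansion $K_i=K_{i-1}\cup\{\sigma,\tau\}$, $\sigma\subset\tau$, $(\sigma,\tau)$ is a regular pair, $\sigma$ lower regular, $\tau$ upper regular; $\widehat W,\underline W,\overline W$ denote the sets of critical, lower regular and upper regular simplices. $K[p]$ is the $\mathbb{Z}_2$-vector space of subsets of $K^{(p)}$ (sum = symmetric difference, $0=\emptyset$). For $\sigma\in K^{(p)}$, $\partial(\sigma)=\{\tau\in K^{(p-1)}:\tau\subset\sigma\}$, $\delta(\sigma)=\{\tau\in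 K^{(p+1)}:\sigma\subset\tau\}$, extended linearly; $Z_p(K)=\ker(\partial:K[p]\to K[p-1])$ (cycles) and $Z^p(K)=\ker(\delta:K[p]\to K[p+1])$ (cocycles). The reference map $\curlywedge$ is the unique map assigning to each $p$-simplex a set of critical $p$-simplices, extended linearly (mod 2), with $\curlywedge(\nu)=\{\nu\}$ for critical $\nu$ and $\curlywedge(\tau)=0=\curlywedge(\partial(\tau))$ for upper regular $\tau$; the coreference map $\curlyvee$ is the unique such map with $\curlyvee(\nu)=\{\nu\}$ for critical $\nu$ and $\curlyvee(\sigma)=0=\curlyvee(\delta(\sigma))$ for lower regular $\sigma$. Skeletons: $W^-_p=\{\nu\in\overline W:\dim\nu\le p\}\cup\{\nu\in\widehat W\cup\underline W:\dim\nu\le p-1\}$, $W^+_p=\{\nu\in\widehat W\cup\overline W:\dim\nu\le p\}\cup\{\nu\in\underline W:\dim\nu\le p-1\}$. *)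

(* Simplices are finite sets of vertices of a finite type V;
   a complex is a {set {set V}}; Z_2-chains are sets of simplices. *)
From mathcomp Require Import all_boot.
Set Implicit Arguments. Unset Strict Implicit. Unset Printing Implicit Defensive.

Section Morse.
Variable V : finType.
Notation simplex := {set V}.
Notation cplx := {set {set V}}.

Definition is_complex (K : cplx) : Prop :=
  set0 \notin K /\
  forall s t : simplex, s \in K -> t != set0 -> t \subset s -> t \in K.

(* dim s = #|s| - 1, so s is a p-simplex iff #|s| = p.+1 *)
Definition pskel (K : cplx) (p : nat) : cplx := [set s in K | #|s| == p.+1].

Definition free_pair (K : cplx) (s t : simplex) : Prop :=
  s \proper t /\ s \in K /\ t \in K /\
  forall x, x \in K -> s \subset x -> x = s \/ x = t.

Definition is_facet (K : cplx) (nu : simplex) : Prop :=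
  nu \in K /\ forall x, x \in K -> nu \subset x -> x = nu.

Inductive step := Fill of simplex | Expand of simplex & simplex.

Definition added (st : step) : cplx :=
  match st with Fill n => [set n] | Expand s t => [set s; t] end.

Definition prefix (W : seq step) (i : nat) : cplx :=
  \bigcup_(st <- take i W) added st.

Definition step_ok (Kprev Knext : cplx) (st : step) : Prop :=
  is_complex Knext /\
  match st with
  | Fill nu => is_facet Knext nu /\ Kprev = Knext :\ nu
  | Expand s t => free_pair Knext s t /\ Kprev = Knext :\: [set s; t]
  end.

Definition is_morse_seq (K : cplx) (W : seq step) : Prop :=
  prefix W (size W) = K /\
  forall i, i < size W -> step_ok (prefix W i) (prefix W i.+1) (nth (Fill set0) W i).

Definition critical (W : seq step) : cplx :=
  [set nu | has (fun st => if st is Fill n then n == nu else false) W].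
Definition lower_reg (W : seq step) : cplx :=
  [set nu | has (fun st => if st is Expand s _ then s == nu else false) W].
Definition upper_reg (W : seq step) : cplx :=
  [set nu | has (fun st => if st is Expand _ t then t == nu else false) W].

Definition bd (K : cplx) (p : nat) (c : cplx) : cplx :=
  [set tau in pskel K p.-1 | (0 < p) && odd #|[set s in c | tau \subset s]|].
Definition cobd (K : cplx) (p : nat) (c : cplx) : cplx :=
  [set tau in pskel K p.+1 | odd #|[set s in c | s \subset tau]|].

Definition chain (K : cplx) (p : nat) (c : cplx) : Prop := c \subset pskel K p.
Definition is_cycle (K : cplx) (p : nat) (z : cplx) : Prop :=
  chain K p z /\ bd K p z = set0.
Definition is_cocycle (K : cplx) (p : nat) (z : cplx) : Prop :=
  chain K p z /\ cobd K p z = set0.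

Definition linext (f : simplex -> cplx) (c : cplx) : cplx :=
  [set nu | odd #|[set s in c | nu \in f s]|].

Definition is_reference_map (K : cplx) (W : seq step) (f : simplex -> cplx) : Prop :=
  (forall p s, s \in pskel K p -> f s \subset critical W :&: pskel K p) /\
  (forall nu, nu \in K -> nu \in critical W -> f nu = [set nu]) /\
  (forall p tau, tau \in pskel K p -> tau \in upper_reg W ->
      f tau = set0 /\ linext f (bd K p [set tau]) = set0).

Definition is_coreference_map (K : cplx) (W : seq step) (f : simplex -> cplx) : Prop :=
  (forall p s, s \in pskel K p -> f s \subset critical W :&: pskel K p) /\
  (forall nu, nu \in K -> nu \in critical W -> f nu = [set nu]) /\
  (forall p sg, sg \in pskel K p -> sg \in lower_reg W ->
      f sg = set0 /\ linext f (cobd K p [set sg]) = set0).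

(* skeletons W^+_p and W^-_p (dim nu <= p  iff  #|nu| <= p+1) *)
Definition Wplus (W : seq step) (p : nat) : cplx :=
  [set nu | ((nu \in critical W) || (nu \in upper_reg W)) && (#|nu| <= p.+1)]
  :|: [set nu | (nu \in lower_reg W) && (#|nu| <= p)].
Definition Wminus (W : seq step) (p : nat) : cplx :=
  [set nu | (nu \in upper_reg W) && (#|nu| <= p.+1)]
  :|: [set nu | ((nu \in critical W) || (nu \in lower_reg W)) && (#|nu| <= p)].

End Morse.

(* Over Z_2, z - z' is the symmetric difference z + z', a p-(co)cycle with
   vanishing (co)reference image.
   A p-simplex of W^+_p is critical or upper regular, and the reference map is
   the identity on critical simplices and zero on upper regular ones; hence
   z + z' consists of upper regular simplices only.  Such a chain, if nonzero,
   has nonzero boundary: the simplex of the chain expanded last is paired with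
   a free face that lies in no other simplex of the chain.  Dually, a p-simplex
   outside W^-_p is critical or lower regular, and for a nonzero chain of lower
   regular simplices the one expanded first has a coface containing no other
   simplex of the chain. *)

From mathcomp Require Import all_boot zify.
Set Implicit Arguments. Unset Strict Implicit. Unset Printing Implicit Defensive.

Section SymmetricDifference.
Variable T : finType.
Implicit Types (A B C : {set T}) (P : pred T).

Definition symdiff A B := [set x | (x \in A) (+) (x \in B)].

Lemma in_symdiff A B x : (x \in symdiff A B) = (x \in A) (+) (x \in B).
Proof. by rewrite inE. Qed.

Lemma symdiff_eq0 A B : (symdiff A B == set0) = (A == B).
Proof.
apply/eqP/eqP => [/setP AB | ->]; apply/setP => x.
  by move: (AB x); rewrite in_symdiff inE => /negbT; rewrite negb_add => /eqP.
by rewrite in_symdiff addbb inE.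
Qed.

Lemma symdiff_subset A B C : A \subset C -> B \subset C -> symdiff A B \subset C.
Proof.
move=> /subsetP AC /subsetP BC; apply/subsetP => x.
by rewrite in_symdiff; case: (boolP (x \in A)) => [/AC | _ /BC].
Qed.

Lemma setId_symdiff A B P :
  [set x in symdiff A B | P x] = symdiff [set x in A | P x] [set x in B | P x].
Proof. by apply/setP => x; rewrite !inE andb_addl. Qed.

Lemma odd_card_symdiff A B : odd #|symdiff A B| = odd #|A| (+) odd #|B|.
Proof.
have AUB : #|A :|: B| = #|A :&: B| + #|symdiff A B|.
  rewrite -(cardsID (A :&: B) (A :|: B)).
  by congr (_ + _); apply: eq_card => x; rewrite !inE; case: (x \in A); case: (x \in B).
by rewrite -!oddD -cardsUI AUB addnAC oddD addnn odd_double.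
Qed.

End SymmetricDifference.

Section Chains.
Variable V : finType.
Implicit Types (K A B C R c : {set {set V}}) (f : {set V} -> {set {set V}}).

Lemma linext_symdiff f A B : linext f (symdiff A B) = symdiff (linext f A) (linext f B).
Proof. by apply/setP => nu; rewrite !inE setId_symdiff odd_card_symdiff. Qed.

Lemma bd_symdiff K p A B : bd K p (symdiff A B) = symdiff (bd K p A) (bd K p B).
Proof.
by apply/setP => tau; rewrite !inE setId_symdiff odd_card_symdiff -!andb_addr.
Qed.

Lemma cobd_symdiff K p A B : cobd K p (symdiff A B) = symdiff (cobd K p A) (cobd K p B).
Proof.
by apply/setP => tau; rewrite !inE setId_symdiff odd_card_symdiff -!andb_addr.
Qed.

Lemma is_cycle_symdiff K p A B :
  is_cycle K p A -> is_cycle K p B -> is_cycle K p (symdiff A B).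
Proof.
move=> [chA bdA] [chB bdB]; split; first exact: symdiff_subset.
by rewrite bd_symdiff bdA bdB; apply/eqP; rewrite symdiff_eq0.
Qed.

Lemma is_cocycle_symdiff K p A B :
  is_cocycle K p A -> is_cocycle K p B -> is_cocycle K p (symdiff A B).
Proof.
move=> [chA cobdA] [chB cobdB]; split; first exact: symdiff_subset.
by rewrite cobd_symdiff cobdA cobdB; apply/eqP; rewrite symdiff_eq0.
Qed.

Lemma linext_proj f C R c :
  {in c :&: C, forall s, f s = [set s]} -> {in c :&: R, forall s, f s = set0} ->
  c \subset C :|: R -> linext f c = c :&: C.
Proof.
move=> fC fR /subsetP cCR; apply/setP => nu; rewrite !inE.
suff -> : [set s in c | nu \in f s] = if (nu \in c) && (nu \in C) then [set nu] else set0.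
  by case: ifP; rewrite ?cards1 ?cards0.
apply/setP => s; rewrite !inE; apply/andP/idP => [[sc nufs] | ].
  have /setUP [sC | sR] := cCR s sc.
    by move: nufs; rewrite fC ?inE ?sc ?sC // => /eqP ->; rewrite sc sC inE.
  by move: nufs; rewrite fR ?inE ?sc ?sR.
case: ifP => [/andP [nuc nuC] | _]; rewrite inE // => /eqP ->.
by rewrite fC ?inE ?nuc ?nuC.
Qed.

End Chains.

Section MorseSequence.
Variable V : finType.
Implicit Types (L c : {set {set V}}) (W : seq (step V)) (s t x : {set V}).

Lemma mem_prefix W i x : (x \in prefix W i) = has (fun st => x \in added st) (take i W).
Proof.
rewrite /prefix; elim: (take i W) => [|st l IH]; first by rewrite big_nil inE.
by rewrite big_cons inE IH.
Qed.

Lemma prefix_added W i j x : j < i -> j < size W ->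
  x \in added (nth (Fill set0) W j) -> x \in prefix W i.
Proof.
move=> ji jW xj; rewrite mem_prefix; apply/(has_nthP (Fill set0)).
by exists j; rewrite ?size_take_min ?leq_min ?ji ?jW ?nth_take.
Qed.

Lemma free_pair_card L s t : is_complex L -> free_pair L s t -> #|t| = #|s|.+1.
Proof.
move=> [_ L_closed] [st [sL [tL free_st]]].
have [s_sub_t [v vt vs]] := properP st.
have vs_sub_t : v |: s \subset t by rewrite subUset sub1set vt.
have vs0 : v |: s != set0 by apply/set0Pn; exists v; rewrite !inE eqxx.
have [vs_eq | vs_eq] := free_st _ (L_closed _ _ tL vs0 vs_sub_t) (subsetUr _ _).
  by move: vs; rewrite -vs_eq !inE eqxx.
by rewrite -vs_eq cardsU1 vs.
Qed.

Definition upper_pos W t :=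
  find (fun st => if st is Expand _ t' then t' == t else false) W.
Definition lower_pos W s :=
  find (fun st => if st is Expand s' _ then s' == s else false) W.

Lemma upper_posP W t : t \in upper_reg W ->
  upper_pos W t < size W /\ exists s, nth (Fill set0) W (upper_pos W t) = Expand s t.
Proof.
rewrite inE => tW; split; first by rewrite /upper_pos -has_find.
have := nth_find (Fill set0) tW; rewrite -/(upper_pos W t).
by case: nth => // s t' /eqP ->; exists s.
Qed.

Lemma lower_posP W s : s \in lower_reg W ->
  lower_pos W s < size W /\ exists t, nth (Fill set0) W (lower_pos W s) = Expand s t.
Proof.
rewrite inE => sW; split; first by rewrite /lower_pos -has_find.
have := nth_find (Fill set0) sW; rewrite -/(lower_pos W s).
by case: nth => // s' t /eqP ->; exists t.
Qed.

Variables (K : {set {set V}}) (W : seq (step V)).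
Hypothesis morseW : is_morse_seq K W.

Lemma prefix_sub i : prefix W i \subset K.
Proof.
case: morseW => <- _; apply/subsetP => x; rewrite !mem_prefix take_size.
by rewrite -{2}(cat_take_drop i W) has_cat => ->.
Qed.

Lemma is_complex_prefix i : 0 < i <= size W -> is_complex (prefix W i).
Proof. by case: i => // i iW; case: (morseW.2 i iW). Qed.

Lemma added_notin_prefix j x : j < size W ->
  x \in added (nth (Fill set0) W j) -> x \notin prefix W j.
Proof.
move=> jW; case: (morseW.2 j jW) => _.
by case: nth => [nu | s t] [_ ->]; rewrite /= !inE => ->.
Qed.

Lemma expand_stepP i s t : i < size W -> nth (Fill set0) W i = Expand s t ->
  [/\ free_pair (prefix W i.+1) s t, s \in K, s != set0 & #|t| = #|s|.+1].
Proof.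
move=> iW ist; have := morseW.2 i iW; rewrite ist => -[cplx_i [free_st _]].
have sP : s \in prefix W i.+1 by case: free_st => _ [].
split=> //.
- exact: subsetP (prefix_sub _) _ sP.
- by apply: contraTneq sP => ->; case: cplx_i.
- exact: free_pair_card free_st.
Qed.

Lemma morse_seq_cover x : x \in K ->
  [|| x \in critical W, x \in lower_reg W | x \in upper_reg W].
Proof.
case: morseW => <- _; rewrite mem_prefix take_size => xW.
rewrite !inE -!has_predU; apply: sub_has xW => -[nu | s t] /=; rewrite !inE.
  by rewrite eq_sym orbF.
by rewrite ![_ == x]eq_sym orbC.
Qed.

Lemma upper_reg_cycle_eq0 p c : c \subset pskel K p -> c \subset upper_reg W ->
  bd K p c = set0 -> c = set0.
Proof.
move=> /subsetP c_p /subsetP c_upper bd0; have [-> // | [t0 t0c]] := set_0Vmem c.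
have [t /= tc t_last] := @arg_maxnP _ t0 (fun x => x \in c) (upper_pos W) t0c.
have [tW [s expand_st]] := upper_posP (c_upper t tc).
have [[st [_ [_ free_st]]] sK s0 card_t] := expand_stepP tW expand_st.
have card_c x : x \in c -> #|x| = p.+1 by move/c_p; rewrite inE => /andP [_ /eqP].
have cofaces_s : [set x in c | s \subset x] = [set t].
  apply/setP => x; rewrite !inE; apply/andP/eqP => [[xc sx] | ->]; last first.
    by rewrite tc (proper_sub st).
  have [xW [s' expand_x]] := upper_posP (c_upper x xc).
  have x_early : x \in prefix W (upper_pos W t).+1.
    apply: (prefix_added (j := upper_pos W x)); rewrite ?ltnS ?t_last //.
    by rewrite expand_x !inE eqxx orbT.
  case: (free_st x x_early sx) => // xs.
  by move: (card_c x xc) (card_c t tc); rewrite xs card_t => ->; lia.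
have : s \in bd K p c.
  rewrite !inE sK cofaces_s cards1 andbT /=.
  by have := card_c t tc; have := s0; rewrite card_t -card_gt0; lia.
by rewrite bd0 inE.
Qed.

Lemma lower_reg_cocycle_eq0 p c : c \subset pskel K p -> c \subset lower_reg W ->
  cobd K p c = set0 -> c = set0.
Proof.
move=> /subsetP c_p /subsetP c_lower cobd0; have [-> // | [s0 s0c]] := set_0Vmem c.
have [s /= sc s_first] := @arg_minnP _ s0 (fun x => x \in c) (lower_pos W) s0c.
have [sW [t expand_st]] := lower_posP (c_lower s sc).
have [[st [_ [tP _]]] _ _ card_t] := expand_stepP sW expand_st.
have card_c x : x \in c -> #|x| = p.+1 by move/c_p; rewrite inE => /andP [_ /eqP].
have faces_t : [set x in c | x \subset t] = [set s].
  apply/setP => x; rewrite !inE; apply/andP/eqP => [[xc xt] | ->]; last first.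
    by rewrite sc (proper_sub st).
  (* Otherwise x is added after t, but as a face of t it is already present. *)
  apply/eqP; apply: contraT => xs.
  have [xW [t' expand_x]] := lower_posP (c_lower x xc).
  have s_before_x : lower_pos W s < lower_pos W x.
    rewrite ltn_neqAle s_first // andbT; apply: contraNneq xs => same_pos.
    by move: expand_st; rewrite same_pos expand_x => -[->].
  have t_before_x : t \in prefix W (lower_pos W x).
    by apply: (prefix_added s_before_x sW); rewrite expand_st !inE eqxx orbT.
  have [_ closed] : is_complex (prefix W (lower_pos W x)).
    by apply: is_complex_prefix; rewrite (leq_ltn_trans _ s_before_x) // ltnW.
  have x0 : x != set0 by rewrite -card_gt0 card_c.
  have x_new : x \in added (nth (Fill set0) W (lower_pos W x)).
    by rewrite expand_x !inE eqxx.
  by move: (added_notin_prefix xW x_new); rewrite (closed _ _ t_before_x x0 xt).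
have : t \in cobd K p c.
  rewrite !inE (subsetP (prefix_sub _) _ tP) faces_t cards1 /=.
  by rewrite card_t (card_c _ sc) eqxx.
by rewrite cobd0 inE.
Qed.

Lemma pskel_Wplus p : pskel K p :&: Wplus W p \subset critical W :|: upper_reg W.
Proof.
apply/subsetP => x; rewrite !inE => /andP [/andP [_ /eqP ->]].
by rewrite ltnn andbF orbF => /andP [].
Qed.

Lemma pskel_Wminus p : pskel K p :\: Wminus W p \subset critical W :|: lower_reg W.
Proof.
apply/subsetP => x /setDP [+ x_Wminus]; rewrite inE => /andP [xK /eqP card_x].
rewrite in_setU; case/or3P: (morse_seq_cover xK) => [-> | -> | x_upper]; rewrite ?orbT //.
by case/setUP: x_Wminus; left; rewrite inE x_upper card_x leqnn.
Qed.

Lemma cycle_Wplus_linext_ref_eq0 ref p c : is_reference_map K W ref ->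
  is_cycle K p c -> c \subset Wplus W p -> linext ref c = set0 -> c = set0.
Proof.
move=> [_ [ref_crit ref_upper]] [/subsetP c_p bd0] c_Wplus ref0.
have c_CU : c \subset critical W :|: upper_reg W.
  by apply: subset_trans (pskel_Wplus p); rewrite subsetI c_Wplus andbT; apply/subsetP.
have ref_id : {in c :&: critical W, forall s, ref s = [set s]}.
  by move=> s /setIP [sc s_crit]; apply: ref_crit s_crit; case/setIdP: (c_p s sc).
have ref_zero : {in c :&: upper_reg W, forall s, ref s = set0}.
  by move=> s /setIP [sc s_upper]; exact: (ref_upper p s (c_p s sc) s_upper).1.
have c_crit0 : c :&: critical W = set0.
  by rewrite -(linext_proj ref_id ref_zero c_CU).
apply: upper_reg_cycle_eq0 bd0; first exact/subsetP.
apply/subsetP => s sc; case/setUP: (subsetP c_CU s sc) => // s_crit.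
by move: (in_setI s c (critical W)); rewrite sc s_crit c_crit0 in_set0.
Qed.

Lemma cocycle_Wminus_linext_coref_eq0 coref p c : is_coreference_map K W coref ->
  is_cocycle K p c -> c \subset K :\: Wminus W p -> linext coref c = set0 -> c = set0.
Proof.
move=> [_ [coref_crit coref_lower]] [/subsetP c_p cobd0] c_Wminus coref0.
have c_CL : c \subset critical W :|: lower_reg W.
  apply: subset_trans (pskel_Wminus p); apply/subsetP => s sc.
  by rewrite in_setD c_p // andbT; case/setDP: (subsetP c_Wminus s sc).
have coref_id : {in c :&: critical W, forall s, coref s = [set s]}.
  by move=> s /setIP [sc s_crit]; apply: coref_crit s_crit; case/setIdP: (c_p s sc).
have coref_zero : {in c :&: lower_reg W, forall s, coref s = set0}.
  by move=> s /setIP [sc s_lower]; exact: (coref_lower p s (c_p s sc) s_lower).1.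
have c_crit0 : c :&: critical W = set0.
  by rewrite -(linext_proj coref_id coref_zero c_CL).
apply: lower_reg_cocycle_eq0 cobd0; first exact/subsetP.
apply/subsetP => s sc; case/setUP: (subsetP c_CL s sc) => // s_crit.
by move: (in_setI s c (critical W)); rewrite sc s_crit c_crit0 in_set0.
Qed.

End MorseSequence.

Theorem theorem7 (V : finType) (K : {set {set V}}) (W : seq (step V))
    (ref coref : {set V} -> {set {set V}}) :
  is_complex K -> is_morse_seq K W ->
  is_reference_map K W ref -> is_coreference_map K W coref ->
  (forall (p : nat) (z z' : {set {set V}}),
      is_cycle K p z -> is_cycle K p z' ->
      linext ref z = linext ref z' ->
      z \subset Wplus W p -> z' \subset Wplus W p -> z = z') /\
  (forall (p : nat) (z z' : {set {set V}}),
      is_cocycle K p z -> is_cocycle K p z' ->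
      linext coref z = linext coref z' ->
      z \subset K :\: Wminus W p -> z' \subset K :\: Wminus W p -> z = z').
Proof.
move=> _ morseW ref_W coref_W.
split=> p z z' z_cyc z'_cyc same_image z_sub z'_sub;
  apply/eqP; rewrite -symdiff_eq0; apply/eqP.
- apply: (cycle_Wplus_linext_ref_eq0 morseW ref_W (is_cycle_symdiff z_cyc z'_cyc)).
    exact: symdiff_subset.
  by rewrite linext_symdiff same_image; apply/eqP; rewrite symdiff_eq0.
- apply: (cocycle_Wminus_linext_coref_eq0 morseW coref_W
           (is_cocycle_symdiff z_cyc z'_cyc)).
    exact: symdiff_subset.
  by rewrite linext_symdiff same_image; apply/eqP; rewrite symdiff_eq0.
Qed.
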